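(* For every constant $K>0$ there is a constant $C=C(K)$ such that for all integers $n\ge 2$ and all real $M$ with $1\le M\le K(\log n)^2$, $$\sum_{\substack{m\in\mathbb{Z}\\ M\le m\le n}} r(n,m)\le \frac{C\,n\log n}{M}.$$
   Context: Logarithms are natural. For positive integers $n,d$, the Euclidean algorithm sets $a_0=n$, $a_1=d$, and for $k\ge1$, as long as $a_k\ne0$, defines $a_{k+1}$ as the remainder of $a_{k-1}$ modulo $a_k$ and $q_k$ as the positive integer with $a_{k-1}=q_ka_k+a_{k+1}$; it stops at the first $\ell$ with $a_\ell=0$. The quotient sequence is $\mathbf{q}(n,d)=(q_1,\dots,q_{\ell-1})$. For integers $1\le m\le n$, $r(n,m)$ is the total number of occurrences of $m$ in the sequences $\mathbf{q}(n,d)$, summed over all $d\in\{1,\dots,n-1\}$ with $\gcd(n,d)=1$. *)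

From Stdlib Require Import Reals Arith List Lia.
Import ListNotations.

(* Euclidean algorithm quotients: state (a_{k-1}, a_k); fuel bounds steps. *)
Fixpoint quots (fuel a b : nat) : list nat :=
  match fuel with
  | O => []
  | S f => if Nat.eqb b 0 then [] else (a / b) :: quots f b (a mod b)
  end.

(* q(n,d) = (q_1,...,q_{l-1}); d+1 steps of fuel suffice since a_k strictly
   decreases from a_1 = d. *)
Definition quot_seq (n d : nat) : list nat := quots (S d) n d.

Definition r (n m : nat) : nat :=
  fold_right Nat.add 0
    (map (fun d => if Nat.eqb (Nat.gcd n d) 1 then count_occ Nat.eq_dec (quot_seq n d) m else 0)
         (seq 1 (n - 1))).

Example quot_seq_test : quot_seq 7 3 = [2; 3]. Proof. reflexivity. Qed.
Example r_test : r 5 2 = 3%nat. Proof. reflexivity. Qed.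

(* Large partial quotients: for [1 <= M <= n],
     sum_{M <= m <= n} r(n, m) <= C n ln n / M
   with the absolute constant C = 4 (1 + 1 / ln 2).

   Run the Euclidean algorithm on (n, d) with continuants u_0 = 0, u_1 = 1,
   u_{k+1} = q_k u_k + u_{k-1}.  Then n = u_k a_{k-1} + u_{k-1} a_k and
   u_k d = +-a_k (mod n) with alternating signs.  If q_k >= M0, then
   M0 u_k a_k <= u_k a_{k-1} <= n, so Q = u_k is a "good multiplier" of
   x = d or of x = n - d: Q x mod n is a nonzero residue at most n / (M0 Q).
   The continuants increase strictly, so distinct large quotients give
   distinct pairs (Q, x).  Exchanging the sums over m, d and Q, and using that
   for fixed Q at most n / (M0 Q) residues x have Q x mod n in [1, n/(M0 Q)],
     sum_{m >= M0} r(n, m) <= sum_{Q <= n} 2 n / (M0 Q) <= (2 n / M0)(1 + ln n).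
   Taking M0 = floor M gives the theorem. *)

From Stdlib Require Import Reals Arith List Lia ZArith Lra.
From Coquelicot Require Import Rcomplements.
Open Scope nat_scope.
Open Scope bool_scope.

Fixpoint sumf (f : nat -> nat) (a len : nat) : nat :=
  match len with O => O | S l => f a + sumf f (S a) l end.

Lemma sumf_split f a x y : sumf f a (x + y) = sumf f a x + sumf f (a + x) y.
Proof.
  revert a; induction x as [|x IH]; intros a; simpl.
  - now rewrite Nat.add_0_r.
  - rewrite IH. replace (S a + x) with (a + S x) by lia. lia.
Qed.

Lemma sumf_last f a n : sumf f a (S n) = sumf f a n + f (a + n).
Proof. replace (S n) with (n + 1) by lia. rewrite sumf_split. simpl. lia. Qed.

Lemma sumf_S f a len : sumf f (S a) len = sumf (fun i => f (S i)) a len.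
Proof. revert a; induction len; intros a; simpl; auto. Qed.

Lemma sumf_le f g a len :
  (forall i, a <= i < a + len -> f i <= g i) -> sumf f a len <= sumf g a len.
Proof.
  revert a; induction len as [|len IH]; intros a H; simpl; [lia|].
  pose proof (H a ltac:(lia)). pose proof (IH (S a) ltac:(intros; apply H; lia)). lia.
Qed.

Lemma sumf_ext f g a len :
  (forall i, a <= i < a + len -> f i = g i) -> sumf f a len = sumf g a len.
Proof.
  intros H. apply Nat.le_antisymm; apply sumf_le; intros i Hi; rewrite (H i Hi); auto.
Qed.

Lemma sumf_add f g a len : sumf (fun i => f i + g i) a len = sumf f a len + sumf g a len.
Proof. revert a; induction len; intros a; simpl; [lia|]. rewrite IHlen. lia. Qed.

Lemma sumf_zero a len : sumf (fun _ => 0) a len = 0.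
Proof. revert a; induction len; intros a; simpl; auto. Qed.

Lemma sumf_swap (f : nat -> nat -> nat) a la b lb :
  sumf (fun i => sumf (fun j => f i j) b lb) a la
  = sumf (fun j => sumf (fun i => f i j) a la) b lb.
Proof.
  revert a; induction la as [|la IH]; intros a; simpl.
  - symmetry. apply sumf_zero.
  - rewrite IH, <- sumf_add. reflexivity.
Qed.

Lemma fold_map_seq (f : nat -> nat) a len :
  fold_right Nat.add 0 (map f (seq a len)) = sumf f a len.
Proof. revert a; induction len; intros a; simpl; auto. Qed.

Lemma sumf_reflect (g : nat -> nat) m : sumf (fun i => g (m - i)) 0 (S m) = sumf g 0 (S m).
Proof.
  induction m as [|m IH]; [reflexivity|].
  change (g (S m - 0) + sumf (fun i => g (S m - i)) 1 (S m) = sumf g 0 (S (S m))).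
  rewrite sumf_S. simpl (fun i => g (S m - S i)).
  rewrite IH, (sumf_last g 0 (S m)). simpl. lia.
Qed.

Lemma sumf_period (h : nat -> nat) p k : (forall x, h (x + p) = h x) ->
  sumf h 0 (k * p) = k * sumf h 0 p.
Proof.
  intros Hp.
  assert (Hshift : forall a len, sumf h (a + p) len = sumf h a len).
  { intros a len; revert a; induction len; intros a; simpl; auto.
    rewrite Hp. replace (S (a + p)) with (S a + p) by lia. now rewrite IHlen. }
  induction k as [|k IH]; simpl; auto.
  rewrite sumf_split, (Hshift 0), IH. lia.
Qed.

Lemma sumf_b2n (P : nat -> bool) a len :
  sumf (fun d => Nat.b2n (P d)) a len = length (filter P (seq a len)).
Proof. revert a; induction len; intros a; simpl; auto. destruct (P a); simpl; auto. Qed.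

(** Few multiples of [Q] have a small nonzero residue modulo [n]. *)

Lemma inj_window_count (f : nat -> nat) N L :
  (forall x y, x < N -> y < N -> f x = f y -> x = y) ->
  sumf (fun x => Nat.b2n ((1 <=? f x) && (f x <=? L))) 0 N <= L.
Proof.
  intros Hinj. rewrite sumf_b2n.
  set (l := filter _ _).
  assert (Hl : forall x, In x l -> x < N /\ 1 <= f x <= L).
  { intros x Hx. apply filter_In in Hx as [H1 H2].
    apply in_seq in H1. apply Bool.andb_true_iff in H2 as [H2 H3].
    apply Nat.leb_le in H2; apply Nat.leb_le in H3. lia. }
  rewrite <- (length_map f l).
  eapply Nat.le_trans; [apply NoDup_incl_length with (l' := seq 1 L)|rewrite length_seq; lia].
  - apply NoDup_map_NoDup_ForallPairs.
    + intros x y Hx Hy E. apply Hl in Hx; apply Hl in Hy. apply Hinj; tauto.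
    + apply NoDup_filter, seq_NoDup.
  - intros y Hy. apply in_map_iff in Hy as [x [<- Hx]]. apply Hl in Hx. apply in_seq. lia.
Qed.

Lemma coprime_mul_mod_inj Q n : 0 < n -> Nat.gcd Q n = 1 ->
  forall x y, x < n -> y < n -> (Q * x) mod n = (Q * y) mod n -> x = y.
Proof.
  intros Hn Hg.
  assert (Hle : forall x y, y <= x -> x < n -> (Q * x) mod n = (Q * y) mod n -> x = y).
  { intros x y Hyx Hx E.
    assert (Hd : Nat.divide n (Q * (x - y))).
    { exists (Q * x / n - Q * y / n).
      pose proof (Nat.div_mod_eq (Q * x) n). pose proof (Nat.div_mod_eq (Q * y) n).
      rewrite Nat.mul_sub_distr_l, Nat.mul_sub_distr_r. nia. }
    apply Nat.gauss in Hd; [| rewrite Nat.gcd_comm; auto].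
    destruct Hd as [z Hz]. destruct z; nia. }
  intros x y Hx Hy E. destruct (Nat.le_ge_cases y x).
  - apply Hle; auto.
  - symmetry; apply Hle; auto.
Qed.

Lemma scaled_window g t L : 0 < g ->
  (1 <=? g * t) && (g * t <=? L) = (1 <=? t) && (t <=? L / g).
Proof.
  intros Hg.
  destruct (Nat.leb_spec 1 (g * t)), (Nat.leb_spec 1 t), (Nat.leb_spec (g * t) L),
    (Nat.leb_spec t (L / g)); simpl; auto; try nia.
  - assert (t <= L / g) by (apply Nat.div_le_lower_bound; nia). lia.
  - pose proof (Nat.Div0.mul_div_le L g). nia.
Qed.

(* For every [Q], at most [L] of the [x < n] have [Q x mod n] in [1, L]:
   with [g = gcd(Q, n)] the residues are [g] times those of the unit
   [Q / g] modulo [n / g], each taken [g] times. *)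
Lemma mul_mod_window_count Q n L : 0 < n ->
  sumf (fun x => Nat.b2n ((1 <=? (Q * x) mod n) && ((Q * x) mod n <=? L))) 0 n <= L.
Proof.
  intros Hn.
  set (g := Nat.gcd Q n).
  assert (Hg0 : 0 < g).
  { unfold g. destruct (Nat.eq_dec (Nat.gcd Q n) 0) as [H|H]; [|lia].
    apply Nat.gcd_eq_0 in H. lia. }
  destruct (Nat.gcd_divide_l Q n) as [Q' HQ]. destruct (Nat.gcd_divide_r Q n) as [n' Hn'].
  fold g in HQ, Hn'.
  assert (Hcop : Nat.gcd Q' n' = 1).
  { pose proof (Nat.gcd_div_gcd Q n g ltac:(lia) eq_refl) as H.
    rewrite HQ, Hn' in H at 1. rewrite !Nat.div_mul in H by lia. exact H. }
  assert (Hn'0 : 0 < n') by nia.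
  set (h := fun x => Nat.b2n ((1 <=? (Q' * x) mod n') && ((Q' * x) mod n' <=? L / g))).
  rewrite (sumf_ext _ h).
  2:{ intros x _. unfold h. rewrite HQ, Hn'.
      replace (Q' * g * x) with (g * (Q' * x)) by ring.
      replace (n' * g) with (g * n') by ring.
      rewrite Nat.Div0.mul_mod_distr_l, scaled_window; auto. }
  rewrite Hn', Nat.mul_comm, sumf_period.
  - pose proof (inj_window_count (fun x => (Q' * x) mod n') n' (L / g)
                  (coprime_mul_mod_inj Q' n' Hn'0 Hcop)).
    pose proof (Nat.Div0.mul_div_le L g). unfold h. nia.
  - intros x. unfold h. replace (Q' * (x + n')) with (Q' * x + Q' * n') by ring.
    rewrite Nat.Div0.mod_add. reflexivity.
Qed.

(* [Q] is a good multiplier of [x] when [Q x mod n] is a nonzero residue of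
   size at most [n / (M0 Q)]; a partial quotient [>= M0] in the Euclidean
   algorithm always produces one (see [good_of_large_quotient]). *)
Definition good (n M0 Q x : nat) : bool :=
  (1 <=? (Q * x) mod n) && ((Q * x) mod n <=? n / (M0 * Q)).

Lemma good_multiplier_count n M0 Q : 1 <= n ->
  sumf (fun d => Nat.b2n (good n M0 Q d) + Nat.b2n (good n M0 Q (n - d))) 1 (n - 1)
  <= 2 * (n / (M0 * Q)).
Proof.
  intros Hn. rewrite sumf_add.
  assert (Hinner : forall h, sumf h 1 (n - 1) <= sumf h 0 (S n)).
  { intros h. replace (S n) with (1 + (n - 1) + 1) by lia. rewrite !sumf_split. simpl. lia. }
  set (k := fun x => Nat.b2n (good n M0 Q x)).
  assert (Hall : sumf k 0 (S n) <= n / (M0 * Q)).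
  { rewrite sumf_last.
    assert (Hkn : k (0 + n) = 0) by (unfold k, good; now rewrite Nat.Div0.mod_mul).
    assert (Hlt : sumf k 0 n <= n / (M0 * Q))
      by exact (mul_mod_window_count Q n (n / (M0 * Q)) ltac:(lia)).
    lia. }
  pose proof (Hinner k) as Hd. pose proof (Hinner (fun d => k (n - d))) as Hnd.
  rewrite sumf_reflect in Hnd.
  change (sumf k 1 (n - 1) + sumf (fun d => k (n - d)) 1 (n - 1) <= 2 * (n / (M0 * Q))).
  lia.
Qed.

(** Large partial quotients produce good multipliers. *)

(* Throughout the algorithm on (n, d), the continuants multiply [d] into
   [+-] the current remainders modulo [n]; the sign [e] selects whether the
   remainder is a small residue of [d] ([e = true]) or of [n - d]. *)
Definition side (n d : nat) (e : bool) : nat := if e then d else n - d.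

Definition sg (e : bool) : Z := if e then 1%Z else (-1)%Z.

Definition good_from (n M0 x lo : nat) : nat :=
  sumf (fun Q => Nat.b2n (good n M0 Q x)) lo (S n - lo).

Definition count_ge (M0 : nat) (l : list nat) : nat := length (filter (Nat.leb M0) l).

Lemma good_from_step n M0 x lo : lo <= n ->
  good_from n M0 x lo = Nat.b2n (good n M0 lo x) + good_from n M0 x (S lo).
Proof.
  intros H. unfold good_from. replace (S n - lo) with (S (n - lo)) by lia.
  replace (S n - S lo) with (n - lo) by lia. reflexivity.
Qed.

Lemma good_from_antitone n M0 x lo hi : lo <= hi -> good_from n M0 x hi <= good_from n M0 x lo.
Proof.
  intros H. remember (hi - lo) as k. revert lo H Heqk.
  induction k as [|k IH]; intros lo H Hk.
  - replace hi with lo by lia. lia.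
  - destruct (Nat.le_gt_cases lo n).
    + rewrite (good_from_step n M0 x lo) by auto. specialize (IH (S lo) ltac:(lia) ltac:(lia)). lia.
    + unfold good_from. replace (S n - hi) with 0 by lia. simpl. lia.
Qed.

Lemma good_of_large_quotient n M0 d e u b (p : Z) :
  1 <= M0 -> d <= n -> 1 <= u -> 1 <= b < n -> M0 * u * b <= n ->
  (Z.of_nat u * Z.of_nat d - p * Z.of_nat n = sg e * Z.of_nat b)%Z ->
  good n M0 u (side n d e) = true.
Proof.
  intros HM0 Hd Hu Hb Hle HZ. unfold good.
  assert (Hmod : (u * side n d e) mod n = b).
  { apply Nat2Z.inj. rewrite Nat2Z.inj_mod, Nat2Z.inj_mul.
    symmetry. destruct e; unfold sg, side in *.
    - apply Z.mod_unique with p; [left; lia|]. lia.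
    - rewrite Nat2Z.inj_sub by lia.
      apply Z.mod_unique with (Z.of_nat u - p)%Z; [left; lia|]. nia. }
  rewrite Hmod.
  assert (b <= n / (M0 * u)) by (apply Nat.div_le_lower_bound; nia).
  apply Bool.andb_true_iff; split; apply Nat.leb_le; lia.
Qed.

Lemma continuant_step n d e a b b' q u v (p s : Z) :
  a = b * q + b' ->
  (Z.of_nat u * Z.of_nat d - p * Z.of_nat n = sg e * Z.of_nat b)%Z ->
  (Z.of_nat v * Z.of_nat d - s * Z.of_nat n = - sg e * Z.of_nat a)%Z ->
  (Z.of_nat (q * u + v) * Z.of_nat d - (Z.of_nat q * p + s) * Z.of_nat n
   = sg (negb e) * Z.of_nat b')%Z.
Proof.
  intros Ha Hu Hv. subst a.
  destruct e; unfold sg in *; simpl negb; rewrite Nat2Z.inj_add, Nat2Z.inj_mul in *; nia.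
Qed.

(* Main invariant: on the state [(a, b)] with continuants [(v, u)], every
   remaining partial quotient [>= M0] yields a good multiplier, and these
   multipliers are strictly increasing within each sign class; so their
   number is bounded by the good multipliers [>= u] of the current side
   plus those [>= q u + v] of the other side. *)
Lemma large_quotient_count n M0 d : 1 <= M0 -> d <= n ->
  forall fuel a b u v (p s : Z) (e : bool),
  n = u * a + v * b -> 1 <= u -> b < a -> a <= n ->
  (Z.of_nat u * Z.of_nat d - p * Z.of_nat n = sg e * Z.of_nat b)%Z ->
  (Z.of_nat v * Z.of_nat d - s * Z.of_nat n = - sg e * Z.of_nat a)%Z ->
  count_ge M0 (quots fuel a b)
  <= good_from n M0 (side n d e) u + good_from n M0 (side n d (negb e)) (a / b * u + v).
Proof.
  intros HM0 Hd fuel.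
  induction fuel as [|f IH]; intros a b u v p s e Hn Hu Hba Han Hub Hva; [apply Nat.le_0_l|].
  cbn [quots]. destruct (Nat.eqb_spec b 0) as [Hb0|Hb0]; [apply Nat.le_0_l|].
  set (q := a / b). set (b' := a mod b).
  assert (Hdm : a = b * q + b') by (apply Nat.div_mod; auto).
  assert (Hb'b : b' < b) by (apply Nat.mod_upper_bound; auto).
  assert (Hq1 : 1 <= q) by (apply Nat.div_le_lower_bound; lia).
  unfold count_ge at 1. cbn [filter].
  assert (Hhead : Nat.b2n (M0 <=? q) <= Nat.b2n (good n M0 u (side n d e))).
  { destruct (Nat.leb_spec M0 q); [|simpl; lia].
    erewrite good_of_large_quotient; eauto; try lia.
    assert (M0 * b <= q * b) by (apply Nat.mul_le_mono_r; auto). nia. }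
  assert (Hu_n : u <= n) by nia.
  rewrite (good_from_step n M0 _ u) by auto.
  assert (Htail : count_ge M0 (quots f b b')
                  <= good_from n M0 (side n d (negb e)) (q * u + v)
                     + good_from n M0 (side n d e) (S u)).
  { destruct (Nat.eqb_spec b' 0) as [Hb'0|Hb'0].
    { rewrite Hb'0. unfold count_ge. destruct f; simpl; lia. }
    pose proof (IH b b' (q * u + v) u (Z.of_nat q * p + s)%Z p (negb e)) as IH'.
    rewrite Bool.negb_involutive in IH'.
    assert (Hq2 : 1 <= b / b') by (apply Nat.div_le_lower_bound; lia).
    pose proof (good_from_antitone n M0 (side n d e) (S u) (b / b' * (q * u + v) + u) ltac:(nia)).
    enough (count_ge M0 (quots f b b') <= good_from n M0 (side n d (negb e)) (q * u + v)
              + good_from n M0 (side n d e) (b / b' * (q * u + v) + u)) by lia.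
    apply IH'; try lia; try nia.
    - eapply continuant_step; eauto.
    - destruct e; unfold sg in *; simpl negb; lia. }
  destruct (M0 <=? q); cbn [length Nat.b2n] in *; fold (count_ge M0 (quots f b b')); lia.
Qed.

(* For [1 <= d < n], every partial quotient [>= M0] of [q(n, d)] is matched
   with a distinct good multiplier [Q <= n] of [d] or of [n - d]: start the
   invariant from [(a, b) = (n, d)] with continuants [(0, 1)]. *)
Lemma large_quotients_of_d n M0 d : 1 <= M0 -> 1 <= d < n ->
  count_ge M0 (quot_seq n d)
  <= sumf (fun Q => Nat.b2n (good n M0 Q d) + Nat.b2n (good n M0 Q (n - d))) 1 n.
Proof.
  intros HM Hd. unfold quot_seq.
  assert (Hcount : count_ge M0 (quots (S d) n d)
                   <= good_from n M0 (side n d true) 1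
                      + good_from n M0 (side n d false) (n / d * 1 + 0)).
  { apply (large_quotient_count n M0 d HM) with (p := 0%Z) (s := 1%Z); unfold sg; lia. }
  assert (Hq : 1 <= n / d * 1 + 0)
    by (rewrite Nat.mul_1_r, Nat.add_0_r; apply Nat.div_le_lower_bound; lia).
  pose proof (good_from_antitone n M0 (side n d false) 1 _ Hq).
  rewrite sumf_add. unfold good_from, side in *.
  replace (S n - 1) with n in * by lia. lia.
Qed.

Lemma sumf_point f x a N : (forall m, m <> x -> f m = 0) -> sumf f a N <= f x.
Proof.
  intros Hf. revert a; induction N as [|N IH]; intros a; simpl; [lia|].
  destruct (Nat.eq_dec a x) as [->|Hax].
  - rewrite (sumf_ext f (fun _ => 0)) by (intros i Hi; apply Hf; lia).
    rewrite sumf_zero. lia.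
  - rewrite (Hf a Hax). apply IH.
Qed.

Lemma occurrences_ge M0 l a N :
  sumf (fun m => if M0 <=? m then count_occ Nat.eq_dec l m else 0) a N <= count_ge M0 l.
Proof.
  induction l as [|x l IH].
  - rewrite (sumf_ext _ (fun _ => 0)) by (intros; destruct (M0 <=? i); auto).
    rewrite sumf_zero. lia.
  - set (hx := fun m => if M0 <=? m then (if Nat.eq_dec x m then 1 else 0) else 0).
    rewrite (sumf_ext _ (fun m => hx m + (if M0 <=? m then count_occ Nat.eq_dec l m else 0))).
    2:{ intros i _. unfold hx. simpl. destruct (M0 <=? i), (Nat.eq_dec x i); lia. }
    rewrite sumf_add.
    assert (Hx : sumf hx a N <= hx x).
    { apply sumf_point. intros m Hm. unfold hx.
      destruct (Nat.eq_dec x m); [congruence|]. now destruct (M0 <=? m). }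
    assert (Hhx : hx x = Nat.b2n (M0 <=? x)).
    { unfold hx. destruct (Nat.eq_dec x x); [|congruence]. now destruct (M0 <=? x). }
    unfold count_ge in *. simpl. destruct (M0 <=? x); simpl in *; lia.
Qed.

Lemma large_quotient_total n M0 : 1 <= n -> 1 <= M0 ->
  sumf (fun m => if M0 <=? m then r n m else 0) 0 (S n)
  <= sumf (fun Q => 2 * (n / (M0 * Q))) 1 n.
Proof.
  intros Hn HM.
  set (occ := fun m d => if M0 <=? m then count_occ Nat.eq_dec (quot_seq n d) m else 0).
  eapply Nat.le_trans.
  { apply sumf_le with (g := fun m => sumf (occ m) 1 (n - 1)).
    intros m _. unfold r, occ. rewrite fold_map_seq.
    destruct (M0 <=? m); [|lia].
    apply sumf_le. intros d _. destruct (Nat.gcd n d =? 1); lia. }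
  rewrite sumf_swap.
  eapply Nat.le_trans.
  { apply sumf_le with (g := fun d => sumf (fun Q => Nat.b2n (good n M0 Q d)
                                                    + Nat.b2n (good n M0 Q (n - d))) 1 n).
    intros d Hd. eapply Nat.le_trans; [apply occurrences_ge|].
    apply large_quotients_of_d; lia. }
  rewrite sumf_swap.
  apply sumf_le. intros Q _. apply good_multiplier_count. lia.
Qed.

(** The analytic estimate. *)

Open Scope R_scope.

Lemma sum_f_R0_sumf f N : sum_f_R0 (fun m => INR (f m)) N = INR (sumf f 0 (S N)).
Proof.
  induction N as [|N IH]; [simpl; now rewrite Nat.add_0_r|].
  rewrite tech5, IH, (sumf_last f 0 (S N)), plus_INR. reflexivity.
Qed.

(* [1 / (N + 1) <= ln (N + 1) - ln N], from [1 + x <= exp x] at [x = -1/(N + 1)]. *)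
Lemma inv_le_ln_diff N : (1 <= N)%nat -> / INR (S N) <= ln (INR (S N)) - ln (INR N).
Proof.
  intros HN. assert (HN' : 1 <= INR N) by (apply (le_INR 1); auto).
  rewrite S_INR.
  set (t := / (INR N + 1)).
  assert (Ht : 0 < t) by (apply Rinv_0_lt_compat; lra).
  assert (Hexp : INR N * / (INR N + 1) <= exp (- t)).
  { replace (INR N * / (INR N + 1)) with (1 + - t) by (unfold t; field; lra).
    apply exp_ineq1_le. }
  apply ln_le in Hexp; [| apply Rmult_lt_0_compat; [lra | apply Rinv_0_lt_compat; lra]].
  rewrite ln_exp, ln_mult, ln_Rinv in Hexp by (try apply Rinv_0_lt_compat; lra).
  lra.
Qed.

Lemma harmonic_bound N : sum_f_R0 (fun i => / INR (S i)) N <= 1 + ln (INR (S N)).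
Proof.
  induction N as [|N IH].
  - simpl. rewrite Rinv_1, ln_1. lra.
  - rewrite tech5. pose proof (inv_le_ln_diff (S N) ltac:(lia)). lra.
Qed.

Lemma div_le_real_div n k : (1 <= k)%nat -> INR (n / k) <= INR n / INR k.
Proof.
  intros Hk. assert (Hk' : 1 <= INR k) by (apply (le_INR 1); auto).
  pose proof (le_INR _ _ (Nat.Div0.mul_div_le n k)) as H. rewrite mult_INR in H.
  apply Rmult_le_reg_r with (INR k); [lra|]. unfold Rdiv.
  rewrite Rmult_assoc, Rinv_l, Rmult_1_r by lra. lra.
Qed.

Lemma divisor_sum_bound n M0 : (1 <= n)%nat -> (1 <= M0)%nat ->
  INR (sumf (fun Q => 2 * (n / (M0 * Q)))%nat 1 n) <= 2 * INR n / INR M0 * (1 + ln (INR n)).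
Proof.
  intros Hn HM. assert (HM' : 1 <= INR M0) by (apply (le_INR 1); auto).
  destruct n as [|N]; [lia|].
  rewrite sumf_S, <- sum_f_R0_sumf.
  eapply Rle_trans.
  { apply sum_Rle with (Bn := fun i => / INR (S i) * (2 * INR (S N) / INR M0)).
    intros i _. rewrite mult_INR.
    assert (HQ : 1 <= INR (S i)) by (apply (le_INR 1); lia).
    eapply Rle_trans.
    { apply Rmult_le_compat_l; [simpl; lra|].
      apply div_le_real_div. nia. }
    rewrite mult_INR. simpl (INR 2). right. field. lra. }
  rewrite <- scal_sum. apply Rmult_le_compat_l.
  - unfold Rdiv. apply Rmult_le_pos; [pose proof (pos_INR (S N)); lra|].
    left. apply Rinv_0_lt_compat. lra.
  - apply harmonic_bound.
Qed.

Lemma nat_floor M : 1 <= M -> exists M0, (1 <= M0)%nat /\ INR M0 <= M < INR M0 + 1.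
Proof.
  intros HM. destruct (base_Int_part M) as [Hle Hgt].
  assert (Hpos : (0 < Int_part M)%Z) by (apply lt_IZR; lra).
  exists (Z.to_nat (Int_part M)).
  rewrite INR_IZR_INZ, Z2Nat.id by lia. split; [lia | lra].
Qed.

Lemma restrict_to_nat_threshold (f : nat -> nat) M M0 N : INR M0 <= M ->
  sum_f_R0 (fun m => if Rle_dec M (INR m) then INR (f m) else 0) N
  <= INR (sumf (fun m => if M0 <=? m then f m else 0)%nat 0 (S N)).
Proof.
  intros HM0. rewrite <- sum_f_R0_sumf. apply sum_Rle. intros m _.
  destruct (Rle_dec M (INR m)) as [Hm|Hm].
  - assert (M0 <= m)%nat by (apply INR_le; lra).
    destruct (Nat.leb_spec M0 m); [lra | lia].
  - apply pos_INR.
Qed.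

Lemma one_plus_ln_le x : 2 <= x -> 1 + ln x <= (1 + / ln 2) * ln x.
Proof.
  intros Hx. pose proof ln_lt_2 as Hl2.
  assert (Hln : ln 2 <= ln x) by (apply ln_le; lra).
  assert (1 <= / ln 2 * ln x); [|lra].
  apply Rmult_le_reg_l with (ln 2); [lra|].
  rewrite <- Rmult_assoc, Rinv_r by lra. lra.
Qed.

Theorem lemma5p1 :
  forall K : R, 0 < K ->
  exists C : R,
    forall (n : nat) (M : R),
      (2 <= n)%nat ->
      1 <= M <= K * (ln (INR n)) ^ 2 ->
      sum_f_R0 (fun m => if Rle_dec M (INR m) then INR (r n m) else 0) n
        <= C * INR n * ln (INR n) / M.
Proof.
  intros K _. exists (4 * (1 + / ln 2)). intros n M Hn [HM _].
  destruct (nat_floor M HM) as (M0 & HM0 & HM0M & HMM0).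
  eapply Rle_trans; [apply restrict_to_nat_threshold, HM0M|].
  eapply Rle_trans; [apply le_INR, large_quotient_total; lia|].
  eapply Rle_trans; [apply divisor_sum_bound; lia|].
  assert (Hn2 : 2 <= INR n) by (apply (le_INR 2); auto).
  pose proof (one_plus_ln_le (INR n) Hn2) as Hlog.
  assert (HM0' : 1 <= INR M0) by (apply (le_INR 1); auto).
  assert (Hinv : / INR M0 <= 2 / M).
  { apply Rmult_le_reg_l with (INR M0 * M); [nra|].
    field_simplify; lra. }
  assert (Hln : 0 <= ln (INR n)) by (rewrite <- ln_1; apply ln_le; lra).
  apply Rle_trans with (2 * INR n * (2 / M) * ((1 + / ln 2) * ln (INR n))).
  - unfold Rdiv at 1. apply Rmult_le_compat; try lra.
    + apply Rmult_le_pos; [lra|]. left. apply Rinv_0_lt_compat. lra.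
    + apply Rmult_le_compat_l; lra.
  - pose proof ln_lt_2. right. field. split; lra.
Qed.
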